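(* Let $\mathcal{S}$ be a state space equipped with a norm $\|\cdot\|$, let $\mathcal{A}$ be a bounded action set, let $f:\mathcal{S}\times\mathcal{A}\to\mathcal{S}$ be discrete-time dynamics $s_{t+1}=f(s_t,a_t)$, let $\ell:\mathcal{S}\to\mathbb{R}$ be a margin function, and let $\gamma\in[0,1)$ be a discount factor. Let $V:\mathcal{S}\to\mathbb{R}$ be the time-discounted Hamilton–Jacobi value function, i.e. $V$ satisfies, for all $s\in\mathcal{S}$, \[ V(s) = (1-\gamma)\,\ell(s) + \gamma \min\Big\{ \ell(s),\ \max_{a\in\mathcal{A}} V(f(s,a)) \Big\}. \] Suppose $\ell$ and $V$ are Lipschitz continuous with Lipschitz constants $L_\ell$ and $L_V$ respectively, and suppose $f(s,a)$ is uniformly Lipschitz in $s$ (uniformly over $a\in\mathcal{A}$) with constant $L_f$, where $\gamma L_f<1$. Then \[ L_V \le L_\ell \cdot \max\left\{1,\ \frac{1-\gamma}{1-\gamma L_f}\right\}. \]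
   Context: A function $g:\mathcal{S}\to\mathbb{R}$ is Lipschitz continuous if there is $L\ge 0$ with $|g(s)-g(\tilde s)|\le L\|s-\tilde s\|$ for all $s,\tilde s\in\mathcal{S}$; the smallest such $L$ is the Lipschitz constant of $g$. The margin function $\ell$ implicitly encodes the failure set $\{s : \ell(s)<0\}$. The maxima over $\mathcal{A}$ in the fixed-point equation are assumed to be attained. *)

From HB Require Import structures.
From mathcomp Require Import all_boot all_order all_algebra.
From mathcomp Require Import all_classical all_reals all_analysis.
Set Implicit Arguments. Unset Strict Implicit. Unset Printing Implicit Defensive.
Import Order.TTheory GRing.Theory Num.Theory.
Import numFieldNormedType.Exports.
Local Open Scope classical_set_scope.
Local Open Scope ring_scope.

Definition is_lipschitz_const (R : realType) (S : normedModType R)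
  (g : S -> R) (L : R) : Prop :=
  0 <= L /\ forall s t : S, `|g s - g t| <= L * `|s - t|.

Definition lipschitz_cont (R : realType) (S : normedModType R) (g : S -> R) : Prop :=
  exists L, is_lipschitz_const g L.

Definition lipschitz_constant (R : realType) (S : normedModType R) (g : S -> R) : R :=
  inf [set L | is_lipschitz_const g L].

Definition unif_lipschitz_const (R : realType) (S : normedModType R) (Ac : Type)
  (A : set Ac) (f : S -> Ac -> S) (L : R) : Prop :=
  0 <= L /\ forall a, A a -> forall s t : S, `|f s a - f t a| <= L * `|s - t|.

From HB Require Import structures.
From mathcomp Require Import all_boot all_order all_algebra.
From mathcomp Require Import all_classical all_reals all_analysis.
From mathcomp Require Import lra.
Set Implicit Arguments. Unset Strict Implicit. Unset Printing Implicit Defensive.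
Import Order.TTheory GRing.Theory Num.Theory.
Import numFieldNormedType.Exports.
Local Open Scope classical_set_scope.
Local Open Scope ring_scope.

(* Write L for the Lipschitz constant of l and K for that of V; both infima
   are attained.  With attained maxima, s |-> max_a V (f s a) is K L_f-Lipschitz,
   and min is 1-Lipschitz for the max-norm, so the fixed-point equation shows
   that V is ((1 - gamma) L + gamma max(L, K L_f))-Lipschitz.  Minimality of K
   gives K <= (1 - gamma) L + gamma max(L, K L_f): either K L_f <= L and then
   K <= L, or K <= (1 - gamma) L + gamma K L_f, i.e.
   K <= L (1 - gamma) / (1 - gamma L_f). *)

Section LipschitzConstants.
Variables (R : realType) (S : normedModType R).
Implicit Types (g h : S -> R) (L M : R).

Lemma lipschitz_constant_le g L :
  is_lipschitz_const g L -> lipschitz_constant g <= L.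
Proof. by apply: ge_inf; exists 0 => ? []. Qed.

Lemma lipschitz_constantP g :
  lipschitz_cont g -> is_lipschitz_const g (lipschitz_constant g).
Proof.
move=> [L gL]; have ne : [set L | is_lipschitz_const g L] !=set0 by exists L.
split; first by apply: lb_le_inf => // ? [].
move=> s t; have [st0|st_neq0] := eqVneq `|s - t| 0.
  by have [_ /(_ s t)] := gL; rewrite st0 !mulr0.
have st_gt0 : 0 < `|s - t| by rewrite lt_def st_neq0 normr_ge0.
rewrite -ler_pdivrMr //; apply: lb_le_inf => // M [_ gM].
by rewrite ler_pdivrMr.
Qed.

Lemma eq_is_lipschitz_const g h L :
  g =1 h -> is_lipschitz_const g L -> is_lipschitz_const h L.
Proof. by move=> /funext ->. Qed.

Lemma is_lipschitz_const_comb g h (a b L M : R) : 0 <= a -> 0 <= b ->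
  is_lipschitz_const g L -> is_lipschitz_const h M ->
  is_lipschitz_const (fun s => a * g s + b * h s) (a * L + b * M).
Proof.
move=> a0 b0 [L0 gL] [M0 hM]; split; first by rewrite addr_ge0 ?mulr_ge0.
move=> s t; rewrite mulrDl -!mulrA.
have -> : a * g s + b * h s - (a * g t + b * h t) =
          a * (g s - g t) + b * (h s - h t) by rewrite !mulrBr opprD addrACA.
apply: le_trans (ler_normD _ _) _.
rewrite !normrM (ger0_norm a0) (ger0_norm b0).
by apply: lerD; apply: ler_wpM2l.
Qed.

Lemma normr_min_sub (a b c d : R) :
  `|Num.min a b - Num.min c d| <= Num.max `|a - c| `|b - d|.
Proof.
suff min_sub (x y z w : R) : Num.min x y - Num.min z w <= Num.max `|x - z| `|y - w|.
  by rewrite ler_norml lerNl opprB min_sub (distrC a) (distrC b) min_sub.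
have [_|_] := leP z w.
- apply: (@le_trans _ _ (x - z)); first by rewrite lerD2r ge_min lexx.
  by rewrite le_max ler_norm.
- apply: (@le_trans _ _ (y - w)); first by rewrite lerD2r ge_min lexx orbT.
  by rewrite le_max ler_norm orbT.
Qed.

Lemma is_lipschitz_const_min g h L M :
  is_lipschitz_const g L -> is_lipschitz_const h M ->
  is_lipschitz_const (fun s => Num.min (g s) (h s)) (Num.max L M).
Proof.
move=> [L0 gL] [M0 hM]; split; first by rewrite le_max L0.
move=> s t; apply: le_trans (normr_min_sub _ _ _ _) _.
rewrite ge_max; apply/andP; split.
- by apply: le_trans (gL s t) _; rewrite ler_wpM2r // le_max lexx.
- by apply: le_trans (hM s t) _; rewrite ler_wpM2r // le_max lexx orbT.
Qed.

End LipschitzConstants.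

Lemma sup_image_attained (T : Type) (R : realType) (A : set T) (g : T -> R) a :
  A a -> (forall b, A b -> g b <= g a) -> sup (g @` A) = g a.
Proof.
move=> Aa ga_max; have ub : ubound (g @` A) (g a) by move=> _ [b Ab <-]; apply: ga_max.
apply/le_anti/andP; split; first by apply: ge_sup => //; exists (g a), a.
by apply: ub_le_sup; [exists (g a) | exists a].
Qed.

Lemma is_lipschitz_const_sup_attained (R : realType) (S : normedModType R)
    (T : Type) (A : set T) (g : S -> T -> R) (L : R) :
  0 <= L ->
  (forall s, exists2 a, A a & forall b, A b -> g s b <= g s a) ->
  (forall a, A a -> forall s t, `|g s a - g t a| <= L * `|s - t|) ->
  is_lipschitz_const (fun s => sup [set g s a | a in A]) L.
Proof.
move=> L0 max_attained gL; split=> // s t.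
have [a Aa sa_max] := max_attained s; have [b Ab tb_max] := max_attained t.
rewrite (sup_image_attained Aa sa_max) (sup_image_attained Ab tb_max) ler_norml.
move: (gL a Aa s t) (gL b Ab s t); rewrite !ler_norml => /andP[_ sta] /andP[stb _].
have sab := sa_max b Ab; have tba := tb_max a Aa.
by apply/andP; split; lra.
Qed.

Lemma le_discounted_bound (R : realFieldType) (gamma L_f L K : R) :
  0 <= gamma -> gamma * L_f < 1 -> 0 <= L ->
  K <= (1 - gamma) * L + gamma * Num.max L (K * L_f) ->
  K <= L * Num.max 1 ((1 - gamma) / (1 - gamma * L_f)).
Proof.
move=> g0 gLf1 L0; have [_|KLf_gt] := leP (K * L_f) L => KL.
- by apply: le_trans (_ : L * 1 <= _); [lra | rewrite ler_wpM2l // le_max lexx].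
- apply: le_trans (_ : L * ((1 - gamma) / (1 - gamma * L_f)) <= _).
    by rewrite mulrA ler_pdivlMr; [nra | lra].
  by rewrite ler_wpM2l // le_max lexx orbT.
Qed.

Theorem theorem1 (R : realType) (S : normedModType R) (U : normedModType R)
  (A : set U) (f : S -> U -> S) (l V : S -> R) (gamma L_f : R) :
  bounded_set A ->
  A !=set0 ->
  0 <= gamma -> gamma < 1 ->
  (* maxima over A are attained *)
  (forall s, exists2 a, A a & forall b, A b -> V (f s b) <= V (f s a)) ->
  (* time-discounted HJ fixed-point equation *)
  (forall s, V s = (1 - gamma) * l s
                   + gamma * Num.min (l s) (sup [set V (f s a) | a in A])) ->
  lipschitz_cont l -> lipschitz_cont V ->
  unif_lipschitz_const A f L_f ->
  gamma * L_f < 1 ->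
  lipschitz_constant V <=
    lipschitz_constant l * Num.max 1 ((1 - gamma) / (1 - gamma * L_f)).
Proof.
move=> _ _ g0 g1 max_attained VE /lipschitz_constantP lL /lipschitz_constantP VK
  [Lf0 fLf] gLf1.
set L := lipschitz_constant l in lL *; set K := lipschitz_constant V in VK *.
have [L0 _] := lL; have [K0 _] := VK.
have maxVf : is_lipschitz_const (fun s => sup [set V (f s a) | a in A]) (K * L_f).
  apply: is_lipschitz_const_sup_attained => [|//|a Aa s t]; first exact: mulr_ge0.
  have [_ /(_ (f s a) (f t a)) VKf] := VK.
  by rewrite -mulrA (le_trans VKf) // ler_wpM2l // fLf.
have VC : is_lipschitz_const V ((1 - gamma) * L + gamma * Num.max L (K * L_f)).
  apply: eq_is_lipschitz_const (fun s => esym (VE s)) _.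
  apply: is_lipschitz_const_comb => //; first by rewrite subr_ge0 ltW.
  exact: is_lipschitz_const_min lL maxVf.
exact: le_discounted_bound (lipschitz_constant_le VC).
Qed.
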